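(* Consider a gate set consisting of almost classical gates that includes CNOT and a diagonal gate $D$. Let $U=U_IU_{I-1}\cdots U_1$ with each $U_i$ from the gate set. Then, after appending ancilla qubits initialized to $|0\rangle$, $U$ can be compiled into an equivalent circuit of almost classical gates (acting as $U$ on the data qubits and returning the ancillas to $|0\rangle$) in which all gates of the form $D^k$, with $k$ an integer, lie in a single layer (i.e., act in parallel on distinct qubits).
   Context: A unitary $V$ on $n$ qubits is almost classical if $V=\sum_x e^{i\phi(x)}|f(x)\rangle\langle x|$ for some bijection $f:\{0,1\}^n\to\{0,1\}^n$ and phases $e^{i\phi(x)}\in U(1)$; i.e. it maps each computational basis state to a computational basis state times a phase (e.g. CNOT, permutation gates, diagonal phase gates). *)

From HB Require Import structures.
From Stdlib Require List.
From mathcomp Require Import all_boot all_order all_algebra.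
Set Implicit Arguments. Unset Strict Implicit. Unset Printing Implicit Defensive.
Import Order.TTheory GRing.Theory Num.Theory.
Local Open Scope ring_scope.

Section QC.
Variable C : numClosedFieldType.

(* computational basis states of m qubits *)
Definition bits (m : nat) := {ffun 'I_m -> bool}.

(* an operator on m qubits, given by its matrix entries  V y x = <y|V|x> *)
Definition op (m : nat) := bits m -> bits m -> C.

Definition op_eq m (A B : op m) := forall y x, A y x = B y x.

Definition almost_classical m (V : op m) :=
  exists (f : bits m -> bits m) (ph : bits m -> C),
    bijective f /\ (forall x, `|ph x| = 1) /\
    forall y x, V y x = (if y == f x then ph x else 0).

Definition diagonal m (V : op m) := forall y x, y != x -> V y x = 0.

Definition opid m : op m := fun y x => (y == x)%:R.
Definition opmul m (A B : op m) : op m := fun y x => \sum_z A y z * B z x.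
Definition adj m (V : op m) : op m := fun y x => (V x y)^*.
Definition oppow m (V : op m) (k : nat) : op m := iter k (opmul V) (@opid m).
(* integer powers (for a unitary V, adj V is its inverse) *)
Definition oppowz m (V : op m) (k : int) : op m :=
  match k with Posz k => oppow V k | Negz k => oppow (adj V) k.+1 end.

(* CNOT, control = qubit 0, target = qubit 1 *)
Definition cnot_map (x : bits 2) : bits 2 :=
  [ffun i : 'I_2 => if val i == 0%N then x ord0 else xorb (x ord0) (x ord_max)].
Definition CNOT : op 2 := fun y x => (y == cnot_map x)%:R.

(* a gate placed in an n-qubit circuit: an operator on m qubits acting on the
   qubits listed in g_qs *)
Record ginst (n : nat) := GInst { g_ar : nat; g_op : op g_ar; g_qs : g_ar.-tuple 'I_n }.

Definition restrict n m (q : m.-tuple 'I_n) (x : bits n) : bits m :=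
  [ffun j => x (tnth q j)].

Definition embed n (g : ginst n) : op n := fun y x =>
  if [forall i, (i \notin g_qs g) ==> (y i == x i)]
  then @g_op n g (restrict (g_qs g) y) (restrict (g_qs g) x) else 0.

Definition state n := bits n -> C.
Definition apply_op n (A : op n) (psi : state n) : state n :=
  fun y => \sum_x A y x * psi x.

(* circuit as a list of gates in temporal order (head = applied first):
   [U_1; ...; U_I] implements U_I ... U_1 *)
Definition run n (c : seq (ginst n)) (psi : state n) : state n :=
  foldl (fun psi g => apply_op (embed g) psi) psi c.

Definition wf_circuit n (c : seq (ginst n)) := forall g, List.In g c -> uniq (g_qs g).

Definition all_gates n (P : ginst n -> Prop) (c : seq (ginst n)) :=
  forall g, List.In g c -> P g.

Definition in_gateset (S : forall m, op m -> Prop) n (g : ginst n) :=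
  S (g_ar g) (@g_op n g).

Definition is_Dpow mD (D : op mD) n (g : ginst n) :=
  exists (e : mD = g_ar g) (k : int),
    op_eq (@g_op n g) (eq_rect mD op (oppowz D k) (g_ar g) e).

Definition allowed (S : forall m, op m -> Prop) mD (D : op mD) n (g : ginst n) :=
  in_gateset S g \/
  (exists V, S (g_ar g) V /\ op_eq (@g_op n g) (adj V)) \/
  is_Dpow D g.

Definition layer n (L : seq (ginst n)) :=
  pairwise (fun g h => all (fun i => i \notin g_qs h) (g_qs g)) L.

(* psi (x) |0...0> on n data qubits (the first n) and a ancillas *)
Definition ext n a (psi : state n) : state (n + a) := fun z =>
  if [forall j : 'I_a, ~~ z (rshift n j)]
  then psi [ffun i => z (lshift a i)] else 0.

End QC.

From HB Require Import structures.
From mathcomp Require Import all_boot all_order all_algebra.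
From Stdlib Require Import ClassicalEpsilon.
Set Implicit Arguments. Unset Strict Implicit. Unset Printing Implicit Defensive.
Import Order.TTheory GRing.Theory Num.Theory.
Local Open Scope ring_scope.

(* Diagonal gates fix every basis state, so on a basis state |x> a circuit of
   almost classical gates acts as the circuit with its D^k gates deleted, up to
   a phase to which each D^k gate contributes according to the basis state
   reached just before it.  CNOTs can save that state in a fresh block of
   ancillas, after which all the D^k gates act in parallel, each on its own
   block.  Uncomputing the saved copies and then running the circuit without
   its D^k gates returns the ancillas to |0> and yields the right basis state
   with the same total phase. *)

Local Notation gop g := (@g_op _ _ g).

Section AlmostClassical.
Variables (C : numClosedFieldType) (m : nat).
Implicit Types (V : op C m) (x y : bits m).

Definition ac_map V x : bits m := odflt x [pick y | V y x != 0].
Definition ac_phase V x : C := V (ac_map V x) x.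

Lemma almost_classicalP V : almost_classical V ->
  [/\ bijective (ac_map V), forall x, `|ac_phase V x| = 1 &
      forall y x, V y x = (y == ac_map V x)%:R * ac_phase V x].
Proof.
case=> f [ph [bij_f [norm_ph defV]]].
have ph_neq0 x : ph x != 0 by rewrite -normr_gt0 norm_ph.
have ac_mapE x : ac_map V x = f x.
  rewrite /ac_map; case: pickP => [y|/(_ (f x))] /=.
    by rewrite defV; case: (y =P f x); rewrite ?eqxx.
  by rewrite defV eqxx (negbTE (ph_neq0 x)).
have ac_phaseE x : ac_phase V x = ph x by rewrite /ac_phase ac_mapE defV eqxx.
split=> [|x|y x].
- by apply: (eq_bij bij_f) => x; rewrite ac_mapE.
- by rewrite ac_phaseE.
- by rewrite defV ac_mapE ac_phaseE; case: eqP; rewrite ?mul1r ?mul0r.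
Qed.

Lemma ac_phase_neq0 V x : almost_classical V -> ac_phase V x != 0.
Proof. by case/almost_classicalP=> _ norm1 _; rewrite -normr_gt0 norm1. Qed.

Lemma ac_map_eq V y x : almost_classical V -> V y x != 0 -> ac_map V x = y.
Proof.
case/almost_classicalP=> _ _ defV; rewrite defV.
by case: (y =P ac_map V x) => [->|]; rewrite ?mul0r ?eqxx.
Qed.

Lemma ac_map_diagonal V x : almost_classical V -> diagonal V -> ac_map V x = x.
Proof.
move=> acV diagV; apply/eqP/contraT => neq_x.
by move: (ac_phase_neq0 x acV); rewrite /ac_phase diagV ?eqxx.
Qed.

Lemma almost_classical_adj V : almost_classical V -> almost_classical (adj V).
Proof.
case/almost_classicalP=> [[g fK gK] norm1 defV].
exists g, (fun x => (ac_phase V (g x))^*); split; first by exists (ac_map V).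
split=> [x|y x]; first by rewrite norm_conjC norm1.
rewrite /adj defV rmorphM /= conjC_nat.
have -> : (x == ac_map V y) = (y == g x) by apply/eqP/eqP=> ->; rewrite ?fK ?gK.
by case: eqP => [->|]; rewrite ?mul1r ?mul0r.
Qed.

Lemma ac_map_adjK V : almost_classical V -> cancel (ac_map V) (ac_map (adj V)).
Proof.
move=> acV x; apply: ac_map_eq; first exact: almost_classical_adj.
by rewrite /adj conjC_eq0 ac_phase_neq0.
Qed.

Lemma ac_phase_adj V x : almost_classical V ->
  ac_phase (adj V) (ac_map V x) * ac_phase V x = 1.
Proof.
move=> acV; case/almost_classicalP: (acV) => _ norm1 _.
by rewrite /ac_phase ac_map_adjK // mulrC -normCK norm1 expr1n.
Qed.

End AlmostClassical.

Section Gates.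
Variables (C : numClosedFieldType) (n : nat).
Implicit Types (g : ginst C n) (W : seq (ginst C n)) (x y : bits n).

Definition ac_gate g := uniq (g_qs g) /\ almost_classical (gop g).

Definition gate_map g x : bits n :=
  [ffun k => if [pick j | tnth (g_qs g) j == k] is Some j
             then ac_map (gop g) (restrict (g_qs g) x) j else x k].
Definition gate_phase g x : C := ac_phase (gop g) (restrict (g_qs g) x).
#[global] Arguments gate_map : simpl never.
#[global] Arguments gate_phase : simpl never.

Lemma gate_map_out g x k : k \notin g_qs g -> gate_map g x k = x k.
Proof.
move=> k_out; rewrite ffunE; case: pickP => [j /eqP tnth_j|//].
by rewrite -tnth_j mem_tnth in k_out.
Qed.

Lemma gate_map_in g x j : uniq (g_qs g) ->
  gate_map g x (tnth (g_qs g) j) = ac_map (gop g) (restrict (g_qs g) x) j.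
Proof.
move=> uniq_qs; rewrite ffunE; case: pickP => [j' /eqP|/(_ j)]; last by rewrite eqxx.
by move/tuple_uniqP: uniq_qs => inj_qs /inj_qs ->.
Qed.

Lemma restrict_gate_map g x : uniq (g_qs g) ->
  restrict (g_qs g) (gate_map g x) = ac_map (gop g) (restrict (g_qs g) x).
Proof. by move=> uniq_qs; apply/ffunP=> j; rewrite ffunE gate_map_in. Qed.

Lemma embedE g y x : ac_gate g -> embed g y x = (y == gate_map g x)%:R * gate_phase g x.
Proof.
case=> uniq_qs /almost_classicalP[_ _ defV]; rewrite /embed defV.
have -> : (y == gate_map g x) =
    [forall i, (i \notin g_qs g) ==> (y i == x i)] &&
    (restrict (g_qs g) y == ac_map (gop g) (restrict (g_qs g) x)).
  apply/eqP/andP => [->|[/forallP y_out /eqP y_in]].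
    split; last by rewrite restrict_gate_map.
    by apply/forallP=> i; apply/implyP=> i_out; rewrite gate_map_out.
  apply/ffunP=> k; case: (boolP (k \in g_qs g)) => [/tnthP[j ->]|k_out].
    by rewrite gate_map_in // -y_in ffunE.
  by rewrite gate_map_out //; apply/eqP/(implyP (y_out k)).
by case: ifP; rewrite ?mul0r.
Qed.

Lemma gate_map_diagonal g x : ac_gate g -> diagonal (gop g) -> gate_map g x = x.
Proof.
case=> uniq_qs acg diag_g; apply/ffunP=> k.
case: (boolP (k \in g_qs g)) => [/tnthP[j ->]|k_out]; last by rewrite gate_map_out.
by rewrite gate_map_in // ac_map_diagonal // ffunE.
Qed.

Fixpoint circ_map W x : bits n :=
  if W is g :: W' then circ_map W' (gate_map g x) else x.
Fixpoint circ_phase W x : C :=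
  if W is g :: W' then circ_phase W' (gate_map g x) * gate_phase g x else 1.

Lemma circ_map_cat W1 W2 x : circ_map (W1 ++ W2) x = circ_map W2 (circ_map W1 x).
Proof. by elim: W1 x => //= g W1 IH x; rewrite IH. Qed.

Lemma circ_phase_cat W1 W2 x :
  circ_phase (W1 ++ W2) x = circ_phase W2 (circ_map W1 x) * circ_phase W1 x.
Proof. by elim: W1 x => /= [|g W1 IH] x; rewrite ?mulr1 // IH mulrA. Qed.

Lemma circ_map_diagonal W x :
  all_gates (fun g => ac_gate g /\ diagonal (gop g)) W -> circ_map W x = x.
Proof.
elim: W x => //= g W IH x diagW; have [acg diag_g] := diagW g (or_introl erefl).
by rewrite gate_map_diagonal // IH // => h Wh; apply: diagW; right.
Qed.

Lemma run_classical W psi y : all_gates ac_gate W ->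
  run W psi y = \sum_x (y == circ_map W x)%:R * circ_phase W x * psi x.
Proof.
elim: W psi => [|g W IH] psi acW.
  rewrite /run /= (bigD1 y) //= eqxx !mul1r big1 ?addr0 // => x /negbTE.
  by rewrite eq_sym => ->; rewrite !mul0r.
have acg : ac_gate g by apply: acW; left.
rewrite (_ : run (g :: W) psi = run W (apply_op (embed g) psi)) // IH /apply_op; last first.
  by move=> h Wh; apply: acW; right.
under eq_bigr => x' _ do rewrite big_distrr /=.
rewrite exchange_big /=; apply: eq_bigr => x _.
rewrite (bigD1 (gate_map g x)) //= big1 ?addr0 => [|x' /negbTE neq_x'].
  by rewrite embedE // eqxx mul1r !mulrA.
by rewrite embedE // neq_x' !mul0r mulr0.
Qed.

Definition gate_adj g := GInst (adj (gop g)) (g_qs g).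
Definition circ_adj W := rev (map gate_adj W).

Lemma ac_gate_adj g : ac_gate g -> ac_gate (gate_adj g).
Proof. by case=> uniq_qs acg; split => //; apply: almost_classical_adj. Qed.

Lemma gate_map_adjK g : ac_gate g -> cancel (gate_map g) (gate_map (gate_adj g)).
Proof.
case=> uniq_qs acg x; apply/ffunP=> k.
case: (boolP (k \in g_qs g)) => [/tnthP[j ->]|k_out]; last by rewrite !gate_map_out.
rewrite (gate_map_in (g := gate_adj g)) //=.
by rewrite restrict_gate_map // ac_map_adjK // ffunE.
Qed.

Lemma gate_phase_adj g x : ac_gate g ->
  gate_phase (gate_adj g) (gate_map g x) * gate_phase g x = 1.
Proof. by case=> uniq_qs acg; rewrite /gate_phase /= restrict_gate_map // ac_phase_adj. Qed.

Lemma circ_adjK W x : all_gates ac_gate W ->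
  circ_map (circ_adj W) (circ_map W x) = x /\
  circ_phase (circ_adj W) (circ_map W x) * circ_phase W x = 1.
Proof.
elim: W x => [|g W IH] x acW /=; first by rewrite mulr1.
have acg : ac_gate g by apply: acW; left.
have [mapK phaseK] := IH (gate_map g x) (fun h Wh => acW h (or_intror Wh)).
rewrite /circ_adj map_cons rev_cons -cats1 circ_map_cat circ_phase_cat -/(circ_adj W).
rewrite mapK /= gate_map_adjK // mul1r; split => //.
by rewrite -mulrA [circ_phase (circ_adj W) _ * _]mulrA phaseK mul1r gate_phase_adj.
Qed.

End Gates.

Lemma In_rev T (x : T) s : List.In x (rev s) -> List.In x s.
Proof.
elim: s => //= y s IH; rewrite rev_cons -cats1 => /List.in_app_iff[/IH|[<-|//]].
  by right.
by left.
Qed.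

Section AllGates.
Variables (C : numClosedFieldType) (n : nat) (P : ginst C n -> Prop).

Lemma all_gates_cat W1 W2 : all_gates P (W1 ++ W2) <-> all_gates P W1 /\ all_gates P W2.
Proof.
split=> [PW|[PW1 PW2] g /List.in_app_iff[W1g|W2g]]; [|exact: PW1|exact: PW2].
by split=> g Wg; apply: PW; apply/List.in_app_iff; by [left | right].
Qed.

Lemma all_gates_map T (f : T -> ginst C n) s :
  (forall x, List.In x s -> P (f x)) -> all_gates P (map f s).
Proof. by move=> Pf g /List.in_map_iff[x [<- sx]]; apply: Pf. Qed.

Lemma all_gates_circ_adj W : (forall g, List.In g W -> P (gate_adj g)) ->
  all_gates P (circ_adj W).
Proof. by move=> PW h Wh; apply: (all_gates_map PW); apply: In_rev. Qed.

End AllGates.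

Section DiagonalPowers.
Variables (C : numClosedFieldType) (m : nat).
Implicit Types (A B V : op C m) (x y : bits m).
Local Arguments oppow : simpl never.

Lemma diagonal_opid : diagonal (@opid C m).
Proof. by move=> y x /negbTE neq_yx; rewrite /opid neq_yx. Qed.

Lemma diagonal_adj A : diagonal A -> diagonal (adj A).
Proof. by move=> diagA y x neq_yx; rewrite /adj diagA ?conjC0 // eq_sym. Qed.

Lemma diagonal_opmul A B : diagonal A -> diagonal B -> diagonal (opmul A B).
Proof.
move=> diagA diagB y x neq_yx; rewrite /opmul big1 // => z _.
have [<-|neq_yz] := eqVneq y z; first by rewrite diagB ?mulr0.
by rewrite diagA ?mul0r.
Qed.

Lemma opmul_diagE A B y : diagonal A -> opmul A B y y = A y y * B y y.
Proof.
move=> diagA; rewrite /opmul (bigD1 y) //= big1 ?addr0 // => z neq_zy.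
by rewrite diagA ?mul0r // eq_sym.
Qed.

Lemma diagonal_oppow A j : diagonal A -> diagonal (oppow A j).
Proof.
by move=> diagA; elim: j => [|j IH]; [exact: diagonal_opid | exact: diagonal_opmul].
Qed.

Lemma oppow_diagE A j y : diagonal A -> oppow A j y y = A y y ^+ j.
Proof.
move=> diagA; elim: j => [|j IH]; first by rewrite /oppow /= /opid eqxx.
by rewrite -[oppow A j.+1]/(opmul A (oppow A j)) opmul_diagE // IH exprS.
Qed.

Lemma diagonal_oppowz A k : diagonal A -> diagonal (oppowz A k).
Proof.
by move=> diagA; case: k => j; apply: diagonal_oppow => //; apply: diagonal_adj.
Qed.

Lemma oppowzN_diag A k y : diagonal A -> oppowz A (- k) y y = (oppowz A k y y)^*.
Proof.
move=> diagA; have diagA' := diagonal_adj diagA.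
case: k => [[|j]|j].
- by rewrite /= /oppow /opid /= eqxx conjC1.
- by rewrite /= !oppow_diagE // rmorphXn.
- by rewrite /= !oppow_diagE // /adj rmorphXn /= conjCK.
Qed.

Lemma adj_oppowzN A V k : diagonal A ->
  op_eq (adj V) (oppowz A k) -> op_eq V (oppowz A (- k)).
Proof.
move=> diagA eqV y x; have -> : V y x = (oppowz A k x y)^* by rewrite -eqV /adj conjCK.
have [<-|neq_yx] := eqVneq y x; first by rewrite oppowzN_diag.
by rewrite !diagonal_oppowz ?conjC0 // eq_sym.
Qed.

End DiagonalPowers.

Section PowerGates.
Variables (C : numClosedFieldType) (mD : nat) (D : op C mD) (n : nat).
Hypothesis diagD : diagonal D.
Implicit Types g : ginst C n.

Lemma is_Dpow_diagonal g : is_Dpow D g -> diagonal (gop g).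
Proof.
case: g => m V qs [/= e [k eqV]]; case: m / e V qs eqV => V _ /= eqV y x neq_yx.
by rewrite eqV diagonal_oppowz.
Qed.

Lemma is_Dpow_adj g : is_Dpow D (gate_adj g) -> is_Dpow D g.
Proof.
case: g => m V qs [/= e [k eqV]]; exists e, (- k).
by case: m / e V qs eqV => V _ /= eqV; apply: adj_oppowzN.
Qed.

End PowerGates.

Lemma cnot_mapK : involutive cnot_map.
Proof.
move=> x; apply/ffunP=> i; rewrite !ffunE /=.
have [i0|i1] := eqVneq (val i) 0%N; first by congr (x _); apply: val_inj.
have -> : i = ord_max by apply: val_inj; case: i i1 => [[|[|]]].
by rewrite /=; case: (x ord0); case: (x ord_max).
Qed.

Section Cnot.
Variable C : numClosedFieldType.

Lemma almost_classical_CNOT : almost_classical (CNOT C).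
Proof.
exists cnot_map, (fun _ => 1); split; first exact: inv_bij cnot_mapK.
by split=> [_|y x]; rewrite ?normr1 // /CNOT; case: eqP.
Qed.

Lemma CNOT_not_diagonal : ~ diagonal (CNOT C).
Proof.
pose x : bits 2 := [ffun _ => true].
have neq_x : cnot_map x != x by apply/eqP => /ffunP /(_ ord_max); rewrite !ffunE.
by move=> /(_ _ _ neq_x); rewrite /CNOT eqxx => /eqP; rewrite oner_eq0.
Qed.

Lemma ac_map_CNOT x : ac_map (CNOT C) x = cnot_map x.
Proof.
by apply: ac_map_eq; [exact: almost_classical_CNOT | rewrite /CNOT eqxx oner_eq0].
Qed.

End Cnot.

Section Ancillas.
Variables (C : numClosedFieldType) (n a : nat).
Local Notation ext := (@ext C n a).
Implicit Types (d : bits n) (z : bits (n + a)) (g : ginst C n).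

Definition zext d : bits (n + a) := [ffun k => if split k is inl i then d i else false].
Definition data z : bits n := [ffun i => z (lshift a i)].
Definition ancilla_free z := [forall j, ~~ z (rshift n j)].

Lemma data_zext d : data (zext d) = d.
Proof. by apply/ffunP=> i; rewrite !ffunE (unsplitK (inl i)). Qed.

Lemma ancilla_free_zext d : ancilla_free (zext d).
Proof. by apply/forallP=> j; rewrite ffunE (unsplitK (inr j)). Qed.

Lemma zext_data z : ancilla_free z -> zext (data z) = z.
Proof.
move/forallP=> z_free; apply/ffunP=> k; rewrite ffunE; case: splitP => [i k_i|j k_j].
  by rewrite ffunE; congr (z _); apply: val_inj.
have -> : k = rshift n j by apply: val_inj.
exact/esym/negbTE.
Qed.

Lemma eq_zext z d : (z == zext d) = ancilla_free z && (data z == d).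
Proof.
apply/eqP/andP => [->|[z_free /eqP <-]]; last by rewrite zext_data.
by rewrite ancilla_free_zext data_zext.
Qed.

Lemma sum_ext (F : bits (n + a) -> C) (psi : state C n) :
  \sum_z F z * ext psi z = \sum_d F (zext d) * psi d.
Proof.
rewrite (eq_bigr (fun z => if ancilla_free z then F z * psi (data z) else 0)); last first.
  by move=> z _; rewrite /ext -/(ancilla_free z); case: ifP; rewrite ?mulr0.
rewrite -big_mkcond (reindex_onto zext data) => [|z /zext_data //].
apply: eq_big => [d|d _]; last by rewrite data_zext.
by rewrite ancilla_free_zext data_zext eqxx.
Qed.

Lemma run_ext (W : seq (ginst C (n + a))) (c : seq (ginst C n)) psi z :
  all_gates (@ac_gate C _) W -> all_gates (@ac_gate C _) c ->
  (forall d, circ_map W (zext d) = zext (circ_map c d) /\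
             circ_phase W (zext d) = circ_phase c d) ->
  run W (ext psi) z = ext (run c psi) z.
Proof.
move=> acW acc Wc; rewrite run_classical // sum_ext /ext -/(ancilla_free z).
rewrite run_classical //; case: ifP => z_free.
  by apply: eq_bigr => d _; have [-> ->] := Wc d; rewrite eq_zext z_free.
by apply: big1 => d _; have [-> _] := Wc d; rewrite eq_zext z_free !mul0r.
Qed.

Definition lift_gate g : ginst C (n + a) :=
  GInst (gop g) (map_tuple (lshift a) (g_qs g)).

Lemma ac_gate_lift g : ac_gate g -> ac_gate (lift_gate g).
Proof. by case=> uniq_qs acg; split => //=; rewrite map_inj_uniq //; apply: lshift_inj. Qed.

Lemma restrict_lift g z : restrict (g_qs (lift_gate g)) z = restrict (g_qs g) (data z).
Proof. by apply/ffunP=> j; rewrite !ffunE tnth_map. Qed.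

Lemma gate_phase_lift g z : gate_phase (lift_gate g) z = gate_phase g (data z).
Proof. by rewrite /gate_phase restrict_lift. Qed.

Lemma gate_map_lift_ancilla g z j : gate_map (lift_gate g) z (rshift n j) = z (rshift n j).
Proof. by rewrite gate_map_out //; apply/mapP=> -[i _ /eqP]; rewrite eq_rlshift. Qed.

Lemma data_gate_map_lift g z : ac_gate g ->
  data (gate_map (lift_gate g) z) = gate_map g (data z).
Proof.
move=> acg; have [uniq_qs _] := acg; have [uniq_lqs _] := ac_gate_lift acg.
apply/ffunP=> i; rewrite ffunE.
case: (boolP (i \in g_qs g)) => [/tnthP[j ->]|i_out].
  rewrite -(tnth_map (lshift a)) -[map_tuple _ _]/(g_qs (lift_gate g)).
  by rewrite !gate_map_in // restrict_lift.
rewrite !gate_map_out ?ffunE //.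
by apply: contra i_out => /mapP[i' qs_i' /lshift_inj ->].
Qed.

Lemma gate_map_lift_zext g d : ac_gate g ->
  gate_map (lift_gate g) (zext d) = zext (gate_map g d).
Proof.
move=> acg; apply/eqP; rewrite eq_zext data_gate_map_lift // data_zext eqxx andbT.
apply/forallP=> j; rewrite gate_map_lift_ancilla.
exact: (forallP (ancilla_free_zext d)).
Qed.

Lemma circ_lift_zext (W : seq (ginst C n)) d : all_gates (@ac_gate C _) W ->
  circ_map (map lift_gate W) (zext d) = zext (circ_map W d) /\
  circ_phase (map lift_gate W) (zext d) = circ_phase W d.
Proof.
elim: W d => [|g W IH] d //= acW.
have acg : ac_gate g by apply: acW; left.
have [<- <-] := IH (gate_map g d) (fun h Wh => acW h (or_intror Wh)).
by rewrite gate_map_lift_zext // gate_phase_lift data_zext.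
Qed.

End Ancillas.

Section DiagonalGates.
Variables (C : numClosedFieldType) (n : nat) (isD : pred (ginst C n)).
Implicit Types (c : seq (ginst C n)) (d : bits n).

Definition diagonal_on (c : seq (ginst C n)) :=
  forall g, List.In g c -> isD g -> diagonal (gop g).

Fixpoint diag_phase c d : C :=
  if c is g :: c' then (if isD g then gate_phase g d else 1) * diag_phase c' (gate_map g d)
  else 1.

Lemma circ_drop_diagonal c d : all_gates (@ac_gate C n) c -> diagonal_on c ->
  circ_map c d = circ_map [seq g <- c | ~~ isD g] d /\
  circ_phase c d = diag_phase c d * circ_phase [seq g <- c | ~~ isD g] d.
Proof.
elim: c d => [|g c IH] d acc diag_c /=; first by rewrite mulr1.
have [-> ->] := IH (gate_map g d) (fun h ch => acc h (or_intror ch))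
                  (fun h ch => diag_c h (or_intror ch)).
case isDg: (isD g) => /=; last by rewrite mul1r mulrA.
rewrite gate_map_diagonal; first by split=> //; rewrite mulrC -mulrA mulrCA.
  by apply: acc; left.
by apply: diag_c => //; left.
Qed.

End DiagonalGates.

Section AncillaBlocks.
Variables (C : numClosedFieldType) (n N : nat).
Local Notation dq i := (lshift (N * n) i).
Implicit Types (b : 'I_N) (i j : 'I_n) (g : ginst C n) (z : bits (n + N * n)).

Definition anc b i : 'I_(n + N * n) := rshift n (mxvec_index b i).

Lemma anc_inj b b' i i' : anc b i = anc b' i' -> b = b' /\ i = i'.
Proof.
move/rshift_inj=> eq_idx.
by case: (bij_inj (onT_bij (curry_mxvec_bij N n)) (x1 := (b, i)) (x2 := (b', i')) eq_idx).
Qed.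

Lemma anc_neq_dq b i j : anc b i != dq j.
Proof. by rewrite eq_rlshift. Qed.

Definition block b z : bits n := [ffun i => z (anc b i)].

Definition copy_gate b i : ginst C (n + N * n) := GInst (CNOT C) [tuple dq i; anc b i].
Definition copy_block b := [seq copy_gate b i | i <- enum 'I_n].
Definition to_block b g : ginst C (n + N * n) := GInst (gop g) (map_tuple (anc b) (g_qs g)).

Lemma ac_gate_copy b i : ac_gate (copy_gate b i).
Proof.
split; last exact: almost_classical_CNOT.
by rewrite /= andbT inE eq_sym anc_neq_dq.
Qed.

Lemma gate_map_copy b i z k :
  gate_map (copy_gate b i) z k = if k == anc b i then xorb (z (dq i)) (z k) else z k.
Proof.
have [uniq_qs _] := ac_gate_copy b i.
have [->|neq_anc] := eqVneq k (anc b i).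
  rewrite -[anc b i]/(tnth (g_qs (copy_gate b i)) ord_max).
  by rewrite gate_map_in //= ac_map_CNOT !ffunE.
have [->|neq_dq] := eqVneq k (dq i).
  rewrite -[dq i]/(tnth (g_qs (copy_gate b i)) ord0).
  by rewrite gate_map_in //= ac_map_CNOT !ffunE.
by rewrite gate_map_out // !inE negb_or neq_anc neq_dq.
Qed.

Lemma circ_map_copy_block_out b z k :
  (forall i, k != anc b i) -> circ_map (copy_block b) z k = z k.
Proof.
move=> k_out; rewrite /copy_block; elim: (enum 'I_n) z => //= j r IH z.
by rewrite IH gate_map_copy (negbTE (k_out j)).
Qed.

Lemma data_copy_block b z : data (circ_map (copy_block b) z) = data z.
Proof.
apply/ffunP=> j; rewrite !ffunE circ_map_copy_block_out // => i.
by rewrite eq_sym anc_neq_dq.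
Qed.

Lemma circ_map_copy_block_anc b z i :
  circ_map (copy_block b) z (anc b i) = xorb (z (dq i)) (z (anc b i)).
Proof.
suff copiesE r z' : uniq r -> circ_map [seq copy_gate b j | j <- r] z' (anc b i) =
    if i \in r then xorb (z' (dq i)) (z' (anc b i)) else z' (anc b i).
  by rewrite /copy_block copiesE ?enum_uniq ?mem_enum.
elim: r z' => //= j r IH z' /andP[r'j uniq_r].
rewrite IH // !gate_map_copy inE [dq i == _]eq_sym (negbTE (anc_neq_dq _ _ _)).
have [eq_ij|neq_ij] := eqVneq i j.
  by rewrite -eq_ij in r'j *; rewrite eqxx (negbTE r'j).
suff /negbTE-> : anc b i != anc b j by [].
by apply: contra_neq neq_ij => /anc_inj[].
Qed.

Lemma ac_gate_to_block b g : ac_gate g -> ac_gate (to_block b g).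
Proof.
by case=> uniq_qs acg; split => //=; rewrite map_inj_uniq // => i j /anc_inj[].
Qed.

Lemma gate_phase_to_block b g z : gate_phase (to_block b g) z = gate_phase g (block b z).
Proof. by rewrite /gate_phase; congr ac_phase; apply/ffunP=> j; rewrite !ffunE tnth_map. Qed.

End AncillaBlocks.

Arguments copy_gate {C n N}.
Arguments copy_block {C n N}.

Section Compilation.
Variables (C : numClosedFieldType) (n N : nat) (isD : pred (ginst C n)).
Local Notation lift := (lift_gate (N * n)).
Implicit Types (tc : seq ('I_N * ginst C n)) (z : bits (n + N * n)).

(* [tc] pairs each gate of the source circuit with its own ancilla block. *)
Fixpoint prep tc : seq (ginst C (n + N * n)) :=
  if tc is (b, g) :: tc' then (if isD g then copy_block b else [:: lift g]) ++ prep tc'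
  else [::].

Definition dlayer tc := [seq to_block p.1 p.2 | p <- tc & isD p.2].

Lemma prep_cons b g tc :
  prep ((b, g) :: tc) = (if isD g then copy_block b else [:: lift g]) ++ prep tc.
Proof. by []. Qed.

Lemma dlayer_cons b g tc :
  dlayer ((b, g) :: tc) = (if isD g then [:: to_block b g] else [::]) ++ dlayer tc.
Proof. by rewrite /dlayer /=; case: ifP. Qed.

Definition compile tc :=
  prep tc ++ dlayer tc ++ circ_adj (prep tc) ++ map lift [seq g <- unzip2 tc | ~~ isD g].

Lemma all_gates_prep (P : ginst C (n + N * n) -> Prop) tc :
  (forall g, List.In g (unzip2 tc) -> ~~ isD g -> P (lift g)) ->
  (forall b i, P (copy_gate b i)) ->
  all_gates P (prep tc).
Proof.
elim: tc => [|[b g] tc IH] P_lift P_copy //=.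
apply/all_gates_cat; split; last by apply: IH => // h tc_h; apply: P_lift; right.
case: ifP => isDg; first exact: all_gates_map.
by move=> h [<-|//]; apply: P_lift; [left | rewrite isDg].
Qed.

Lemma all_gates_dlayer (P : ginst C (n + N * n) -> Prop) tc :
  (forall b g, List.In g (unzip2 tc) -> isD g -> P (to_block b g)) ->
  all_gates P (dlayer tc).
Proof.
move=> P_block; apply: all_gates_map => -[b g] /List.filter_In[tc_bg isDg].
by apply: P_block => //; apply: (List.in_map snd _ _ tc_bg).
Qed.

Lemma layer_dlayer tc : uniq (unzip1 tc) -> layer (dlayer tc).
Proof.
elim: tc => [|[b g] tc IH] // /andP[tc'b /IH layer_tc].
rewrite /dlayer /=; case: ifP => _ //=; rewrite layer_tc andbT all_map all_filter.
elim: tc {IH layer_tc} tc'b => //= -[b' g'] tc IH.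
rewrite inE negb_or => /andP[neq_bb' /IH ->]; rewrite andbT; apply/implyP=> _.
apply/allP=> _ /mapP[i _ ->]; apply/mapP=> -[j _ /anc_inj[eq_bb' _]].
by rewrite eq_bb' eqxx in neq_bb'.
Qed.

Lemma prep_block_frame tc b i z :
  b \notin unzip1 tc -> circ_map (prep tc) z (anc b i) = z (anc b i).
Proof.
elim: tc z => //= -[b' g] tc IH z; rewrite inE negb_or => /andP[neq_bb' tc'b].
rewrite circ_map_cat IH //; case: ifP => _; last exact: gate_map_lift_ancilla.
by apply: circ_map_copy_block_out => j; apply: contra_neq neq_bb' => /anc_inj[].
Qed.

Lemma circ_phase_dlayer tc z : uniq (unzip1 tc) ->
  all_gates (@ac_gate C n) (unzip2 tc) -> diagonal_on isD (unzip2 tc) ->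
  (forall b i, b \in unzip1 tc -> z (anc b i) = false) ->
  circ_phase (dlayer tc) (circ_map (prep tc) z) = diag_phase isD (unzip2 tc) (data z).
Proof.
elim: tc z => [|[b g] tc IH] z // /andP[tc'b uniq_tc] ac_tc diag_tc z_free.
have acg : ac_gate g by apply: ac_tc; left.
have {}IH := IH _ uniq_tc (fun h tc_h => ac_tc h (or_intror tc_h))
                          (fun h tc_h => diag_tc h (or_intror tc_h)).
rewrite prep_cons dlayer_cons circ_map_cat.
case isDg: (isD g) => /=; last first.
  rewrite isDg mul1r IH ?data_gate_map_lift // => b' i tc_b'.
  by rewrite gate_map_lift_ancilla z_free // inE tc_b' orbT.
have diag_g : diagonal (gop g) by apply: diag_tc; [left|].
set y := circ_map (copy_block b) z.
have y_block : block b (circ_map (prep tc) y) = data z.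
  apply/ffunP=> i; rewrite !ffunE prep_block_frame // circ_map_copy_block_anc.
  by rewrite z_free ?inE ?eqxx //; case: (z _).
rewrite gate_map_diagonal //; last exact: ac_gate_to_block.
rewrite IH.
- by rewrite isDg gate_phase_to_block y_block data_copy_block gate_map_diagonal // mulrC.
- move=> b' i tc_b'; rewrite circ_map_copy_block_out ?z_free ?inE ?tc_b' ?orbT //.
  by move=> j; apply: contraNneq tc'b => /anc_inj[<-].
Qed.

Lemma compile_zext tc d : uniq (unzip1 tc) ->
  all_gates (@ac_gate C n) (unzip2 tc) -> diagonal_on isD (unzip2 tc) ->
  circ_map (compile tc) (zext (N * n) d) = zext (N * n) (circ_map (unzip2 tc) d) /\
  circ_phase (compile tc) (zext (N * n) d) = circ_phase (unzip2 tc) d.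
Proof.
move=> uniq_tc ac_tc diag_tc.
have ac_prep : all_gates (@ac_gate C _) (prep tc).
  apply: all_gates_prep => [g /ac_tc acg _|b i]; first exact: ac_gate_lift.
  exact: ac_gate_copy.
have diag_dlayer : all_gates (fun h => ac_gate h /\ diagonal (gop h)) (dlayer tc).
  apply: all_gates_dlayer => b g tc_g isDg.
  by split; [exact/ac_gate_to_block/ac_tc | exact: diag_tc].
have ac_rest : all_gates (@ac_gate C n) [seq g <- unzip2 tc | ~~ isD g].
  by move=> g /List.filter_In[/ac_tc].
set x := zext (N * n) d; set y := circ_map (prep tc) x.
have x_free b i : x (anc b i) = false.
  exact/negbTE/(forallP (ancilla_free_zext (N * n) d)).
have [adjK phase_adjK] := circ_adjK x ac_prep.
have [map_rest phase_rest] := circ_lift_zext (N * n) d ac_rest.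
have [map_split phase_split] := circ_drop_diagonal d ac_tc diag_tc.
have phase_layer := circ_phase_dlayer uniq_tc ac_tc diag_tc (fun b i _ => x_free b i).
rewrite /compile !circ_map_cat !circ_phase_cat (circ_map_diagonal _ diag_dlayer) -/y.
rewrite adjK map_rest map_split; split=> //.
rewrite phase_rest phase_layer data_zext phase_split mulrAC -(mulrA _ _ (circ_phase _ x)).
by rewrite phase_adjK mulr1 mulrC.
Qed.

End Compilation.

Section CompiledGates.
Variables (C : numClosedFieldType) (S : forall m : nat, op C m -> Prop).
Variables (mD : nat) (D : op C mD) (n N : nat) (isD : pred (ginst C n)).
Variable tc : seq ('I_N * ginst C n).
Hypothesis isDP : forall g, reflect (is_Dpow D g) (isD g).
Hypothesis S_CNOT : S (CNOT C).
Hypothesis diagD : diagonal D.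
Hypothesis ac_tc : all_gates (@ac_gate C n) (unzip2 tc).
Hypothesis S_tc : all_gates (@in_gateset C S n) (unzip2 tc).
Local Notation lift := (lift_gate (N * n)).

Lemma prep_gates :
  all_gates (fun h => [/\ ac_gate h, in_gateset S h & ~ is_Dpow D h]) (prep isD tc).
Proof.
apply: all_gates_prep => [g tc_g /isDP nDg|b i].
  by split; [exact/ac_gate_lift/ac_tc | exact: S_tc |].
split; [exact: ac_gate_copy | by [] | move/(is_Dpow_diagonal diagD)].
exact: CNOT_not_diagonal.
Qed.

Lemma dlayer_gates :
  all_gates (fun h => [/\ ac_gate h, in_gateset S h & is_Dpow D h]) (dlayer isD tc).
Proof.
apply: all_gates_dlayer => b g tc_g /isDP Dg.
by split; [exact/ac_gate_to_block/ac_tc | exact: S_tc |].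
Qed.

Lemma uncompute_gates :
  all_gates (fun h => [/\ ac_gate h, allowed S D h & ~ is_Dpow D h])
    (circ_adj (prep isD tc) ++ map lift [seq g <- unzip2 tc | ~~ isD g]).
Proof.
apply/all_gates_cat; split.
  apply: all_gates_circ_adj => h /prep_gates[ac_h S_h nD_h]; split.
  - exact: ac_gate_adj.
  - by right; left; exists (gop h).
  - by move/(is_Dpow_adj diagD).
apply: all_gates_map => g /List.filter_In[tc_g /isDP nDg].
by split; [exact/ac_gate_lift/ac_tc | left; exact: S_tc |].
Qed.

Lemma compile_gates : all_gates (fun h => ac_gate h /\ allowed S D h) (compile isD tc).
Proof.
move=> h /List.in_app_iff[/prep_gates[]|
           /List.in_app_iff[/dlayer_gates[]|/uncompute_gates[]]] ac_h ok_h _;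
  by split=> //; first [done | left].
Qed.

End CompiledGates.

Theorem lemma2 (C : numClosedFieldType)
  (S : forall m : nat, op C m -> Prop) (mD : nat) (D : op C mD)
  (HS : forall m (V : op C m), S m V -> almost_classical V)
  (HCNOT : S 2%N (CNOT C)) (HD : S mD D) (HDdiag : diagonal D)
  (n : nat) (c : seq (ginst C n))
  (Hwf : wf_circuit c) (HcS : all_gates (@in_gateset C S n) c) :
  exists (a : nat) (w1 L w2 : seq (ginst C (n + a))),
    wf_circuit (w1 ++ L ++ w2) /\
    all_gates (@allowed C S mD D (n + a)) (w1 ++ L ++ w2) /\
    all_gates (fun g => ~ @is_Dpow C mD D (n + a) g) w1 /\
    all_gates (fun g => ~ @is_Dpow C mD D (n + a) g) w2 /\
    all_gates (@is_Dpow C mD D (n + a)) L /\ layer L /\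
    (forall (psi : state C n) (z : bits (n + a)),
        run (w1 ++ L ++ w2) (@ext C n a psi) z = @ext C n a (run c psi) z).
Proof.
pose isD (g : ginst C n) : bool := excluded_middle_informative (is_Dpow D g).
have isDP g : reflect (is_Dpow D g) (isD g) by apply: sumboolP.
pose N := size c; pose tc := zip (enum 'I_N) c.
have tc_c : unzip2 tc = c by rewrite unzip2_zip // size_enum_ord.
have uniq_tc : uniq (unzip1 tc) by rewrite unzip1_zip ?size_enum_ord ?enum_uniq.
have ac_tc : all_gates (@ac_gate C n) (unzip2 tc).
  by rewrite tc_c => g cg; split; [exact: Hwf | exact/HS/HcS].
have S_tc : all_gates (@in_gateset C S n) (unzip2 tc) by rewrite tc_c.
have diag_tc : diagonal_on isD (unzip2 tc) by move=> g _ /isDP; apply: is_Dpow_diagonal.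
have ok_compile := compile_gates isDP HCNOT HDdiag ac_tc S_tc.
exists (N * n), (prep isD tc), (dlayer isD tc),
  (circ_adj (prep isD tc) ++ map (lift_gate (N * n)) [seq g <- unzip2 tc | ~~ isD g]).
split; first by move=> h /ok_compile[[]].
split; first by move=> h /ok_compile[].
split; first by move=> h /(prep_gates isDP HCNOT HDdiag ac_tc S_tc)[].
split; first by move=> h /(uncompute_gates isDP HCNOT HDdiag ac_tc S_tc)[].
split; first by move=> h /(dlayer_gates isDP ac_tc S_tc)[].
split; first exact: layer_dlayer.
move=> psi z; rewrite -tc_c; apply: run_ext => [h /ok_compile[] //|//|d].
exact: compile_zext.
Qed.
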